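(* Let $q$ be a power of an odd prime with $q\equiv 3\pmod 4$. Let $P\subset\mathbb{F}_q^3$ be a set of points and $S$ a set of spheres in $\mathbb{F}_q^3$ all of whose radii are squares in $\mathbb{F}_q$, with $|P|=|S|\sim q^2$. Then \[ I(P,S)\ll |P|^{3/4}|S|^{3/4}. \]
   Context: A sphere in $\mathbb{F}_q^3$ with center $c\in\mathbb{F}_q^3$ and radius $r\in\mathbb{F}_q$ is $\{x : (x_1-c_1)^2+(x_2-c_2)^2+(x_3-c_3)^2=r\}$; a radius is a square if it equals $t^2$ for some $t\in\mathbb{F}_q$. $I(P,S)=\#\{(p,s)\in P\times S: p\in s\}$. $X\ll Y$ means $X\le CY$ for an absolute constant $C>0$, and $X\sim Y$ means $Y\ll X\ll Y$. *)

From HB Require Import structures.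
From mathcomp Require Import all_boot all_order all_algebra all_field.
Set Implicit Arguments. Unset Strict Implicit. Unset Printing Implicit Defensive.
Import GRing.Theory.
Local Open Scope ring_scope.

Definition on_sphere (F : finFieldType) (x c : 'rV[F]_3) (r : F) : bool :=
  \sum_(i < 3) (x ord0 i - c ord0 i) ^+ 2 == r.

Definition is_square (F : finFieldType) (r : F) : bool :=
  [exists t : F, r == t ^+ 2].

Definition incidences (F : finFieldType) (P : {set 'rV[F]_3})
  (S : {set 'rV[F]_3 * F}) : nat :=
  #|[set ps in setX P S | on_sphere ps.1 ps.2.1 ps.2.2]|.

(* Write [q = #|F|], [deg x] for the number of spheres of [S] through [x], [D = sum_x deg x]
   and [E = sum_x deg x ^ 2].  As [-1] is not a square in [F], a sphere of square radius has
   [q^2 + O(q)] points, and two distinct ones meet in at most [q + 2] points: their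
   intersection lies in a plane and contains no line (a line on a sphere of nonzero radius
   [t^2] would be isotropic and orthogonal to a radius vector, forcing [-1] to be a square;
   two null cones are handled directly), so distinct points of it lie on distinct lines of
   the pencil through any one of them.  Hence [D = |S| q^2 + O(q |S|)] and [E <= D + (q + 2) |S|^2], so in
   the second moment [q^3 E - D^2 = O(|S| q^5 + |S|^2 q^3)] the main terms cancel.
   Cauchy-Schwarz over [P] gives [(q^3 I - |P| D)^2 <= |P| q^3 (q^3 E - D^2)], i.e.
   [I <= |P| |S| / q + O(|P|^(1/2) (|S|^(1/2) q + |S|))], which is [O(|P|^(3/4) |S|^(3/4))]
   when [|P| = |S| ~ q^2]. *)

From mathcomp Require Import all_boot all_order all_algebra all_field.
From mathcomp Require Import ring lra zify.
Set Implicit Arguments. Unset Strict Implicit. Unset Printing Implicit Defensive.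
Import Order.TTheory GRing.Theory Num.Theory.
Local Open Scope ring_scope.

Lemma leq_card_in_homo (T T' : finType) (A : {pred T}) (B : {pred T'}) (f : T -> T') :
  {in A &, injective f} -> {in A, forall x, f x \in B} -> (#|A| <= #|B|)%N.
Proof.
move=> f_inj fAB; rewrite -(card_in_imset f_inj); apply: subset_leq_card.
by apply/subsetP => _ /imsetP[x xA ->]; exact: fAB.
Qed.

Section DotProduct.
Variables (R : comRingType) (n : nat).

Definition dotv (u v : 'rV[R]_n) : R := \sum_i u 0 i * v 0 i.
Definition sqnorm (u : 'rV[R]_n) : R := dotv u u.

Lemma dotv0l (w : 'rV[R]_n) : dotv 0 w = 0.
Proof. by rewrite /dotv big1 // => i _; rewrite mxE mul0r. Qed.

Lemma dotvBl (u v w : 'rV[R]_n) : dotv (u - v) w = dotv u w - dotv v w.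
Proof. by rewrite /dotv -sumrB; apply: eq_bigr => i _; rewrite !mxE mulrBl. Qed.

Lemma dotvZl (t : R) (u w : 'rV[R]_n) : dotv (t *: u) w = t * dotv u w.
Proof. by rewrite /dotv mulr_sumr; apply: eq_bigr => i _; rewrite !mxE mulrA. Qed.

Lemma dotv_delta (u : 'rV[R]_n) (j : 'I_n) : dotv u (delta_mx 0 j) = u 0 j.
Proof.
rewrite /dotv (bigD1 j) //= big1 => [|i ij]; first by rewrite mxE !eqxx mulr1 addr0.
by rewrite mxE (negPf ij) andbF mulr0.
Qed.

Lemma sqnormDZ (e d : 'rV[R]_n) (t : R) :
  sqnorm (e + t *: d) = sqnorm e + 2 * t * dotv e d + t ^+ 2 * sqnorm d.
Proof.
rewrite /sqnorm /dotv !mulr_sumr -!big_split /=.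
by apply: eq_bigr => i _; rewrite !mxE; ring.
Qed.

End DotProduct.

Section ThreeSpace.
Variable R : comRingType.
Implicit Types u v d e : 'rV[R]_3.

Lemma row3P u v : u 0 0 = v 0 0 -> u 0 1 = v 0 1 -> u 0 2 = v 0 2 -> u = v.
Proof.
move=> e0 e1 e2; apply/rowP => i.
by case: i => [[|[|[|//]]] ?]; [move: e0 | move: e1 | move: e2];
   congr (_ = _); congr (_ _ _); apply: val_inj.
Qed.

Lemma dotv3E u v : dotv u v = u 0 0 * v 0 0 + u 0 1 * v 0 1 + u 0 2 * v 0 2.
Proof.
rewrite /dotv !big_ord_recl big_ord0 addr0 addrA.
by congr (_ * _ + _ * _ + _ * _); congr (_ _ _); apply: val_inj.
Qed.

Definition vec3 (a b c : R) : 'rV[R]_3 := \row_(i < 3) [:: a; b; c]`_i.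

Lemma sqnorm_vec3 a b c : sqnorm (vec3 a b c) = a ^+ 2 + b ^+ 2 + c ^+ 2.
Proof. by rewrite /sqnorm dotv3E !mxE /= !expr2. Qed.

Lemma sqnorm_perp_isotropic d e : sqnorm d = 0 -> dotv e d = 0 ->
  d 0 2 ^+ 2 * sqnorm e = - (d 0 0 * e 0 1 - d 0 1 * e 0 0) ^+ 2.
Proof.
move=> dd ed; apply/eqP; rewrite -subr_eq0 opprK.
have -> : d 0 2 ^+ 2 * sqnorm e + (d 0 0 * e 0 1 - d 0 1 * e 0 0) ^+ 2 =
    (e 0 0 ^+ 2 + e 0 1 ^+ 2) * sqnorm d
    + (dotv e d - 2 * (e 0 0 * d 0 0 + e 0 1 * d 0 1)) * dotv e d.
  by rewrite /sqnorm !dotv3E; ring.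
by rewrite dd ed !mulr0 addr0.
Qed.

End ThreeSpace.

Section MinusOneNonSquare.
Variable F : fieldType.
Hypothesis sqr_neqN1 : forall x : F, x ^+ 2 != -1.
Implicit Types d e : 'rV[F]_3.

Lemma two_neq0 : (2 : F) != 0.
Proof. by apply: contraNneq (sqr_neqN1 1) => h2; rewrite expr1n -addr_eq0 -mulr2n h2. Qed.

Lemma sqr_add_sqr_eq0 (x y : F) : x ^+ 2 + y ^+ 2 = 0 -> x = 0 /\ y = 0.
Proof.
move=> h; suff x0 : x = 0 by move: h; rewrite x0 expr0n add0r => /eqP; rewrite expf_eq0 => /eqP.
have yx : y ^+ 2 = - x ^+ 2 by apply/eqP; rewrite -addr_eq0 addrC h.
have [//|x0] := eqVneq x 0.
by have := sqr_neqN1 (y / x); rewrite expr_div_n yx mulNr mulfV ?expf_neq0 ?eqxx.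
Qed.

Lemma add1_sqr_neq0 (m : F) : 1 + m ^+ 2 != 0.
Proof. by apply/eqP; rewrite -{1}(expr1n _ 2) => /sqr_add_sqr_eq0[/eqP]; rewrite oner_eq0. Qed.

Lemma isotropic_eq0 d : sqnorm d = 0 -> d 0 2 = 0 -> d = 0.
Proof.
rewrite /sqnorm dotv3E => dd d2; have [d0 d1] : d 0 0 = 0 /\ d 0 1 = 0.
  by apply: sqr_add_sqr_eq0; rewrite !expr2 -dd d2 mulr0 addr0.
by apply: row3P; rewrite mxE.
Qed.

Lemma perp_isotropic_sqr d e t :
  sqnorm d = 0 -> dotv e d = 0 -> sqnorm e = t ^+ 2 -> t != 0 -> d = 0.
Proof.
move=> dd ed et t0; have [d2|d2] := eqVneq (d 0 2) 0; first exact: isotropic_eq0.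
have := sqnorm_perp_isotropic dd ed; rewrite et => h.
set w := d 0 0 * e 0 1 - d 0 1 * e 0 0 in h.
have w0 : w != 0.
  apply/eqP => w0; move: (mulf_neq0 (expf_neq0 2 d2) (expf_neq0 2 t0)).
  by rewrite h w0 expr0n oppr0 eqxx.
by have := sqr_neqN1 (d 0 2 * t / w); rewrite expr_div_n exprMn h mulNr mulfV ?expf_neq0 ?eqxx.
Qed.

Lemma perp_isotropic_null d e : sqnorm d = 0 -> dotv e d = 0 -> sqnorm e = 0 ->
  d 0 2 *: e = e 0 2 *: d.
Proof.
move=> dd ed ee; have [d2|d2] := eqVneq (d 0 2) 0.
  by rewrite d2 scale0r (isotropic_eq0 dd d2) scaler0.
set w := d 0 0 * e 0 1 - d 0 1 * e 0 0.
have w0 : w = 0.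
  have := sqnorm_perp_isotropic dd ed; rewrite ee mulr0 => /esym/eqP.
  by rewrite oppr_eq0 expf_eq0 => /eqP.
apply: row3P; rewrite !mxE; last exact: mulrC.
- apply: (mulfI d2); apply: subr0_eq.
  transitivity (sqnorm d * e 0 0 - d 0 0 * dotv e d + d 0 1 * w).
    by rewrite /w /sqnorm !dotv3E; ring.
  by rewrite dd ed w0; ring.
- apply: (mulfI d2); apply: subr0_eq.
  transitivity (sqnorm d * e 0 1 - d 0 1 * dotv e d - d 0 0 * w).
    by rewrite /w /sqnorm !dotv3E; ring.
  by rewrite dd ed w0; ring.
Qed.

Lemma isotropic_of_collinear_on_sphere n (e d : 'rV[F]_n) (r t : F) :
  sqnorm e = r -> sqnorm (e + d) = r -> sqnorm (e + t *: d) = r -> t != 0 -> t != 1 ->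
  sqnorm d = 0 /\ dotv e d = 0.
Proof.
move=> <-; rewrite -{1}[d]scale1r !sqnormDZ => h1 ht t0 t1.
have a1 : 2 * dotv e d + sqnorm d = 0.
  by apply: (addrI (sqnorm e)); rewrite addr0 -{2}h1 expr1n; ring.
have a2 : 2 * dotv e d + t * sqnorm d = 0.
  apply/eqP; rewrite -(mulrI_eq0 _ (mulfI t0)).
  by apply/eqP/(addrI (sqnorm e)); rewrite addr0 -{2}ht; ring.
have dd : sqnorm d = 0.
  have : (1 - t) * sqnorm d = (2 * dotv e d + sqnorm d) - (2 * dotv e d + t * sqnorm d) by ring.
  by rewrite a1 a2 subrr => /eqP; rewrite mulf_eq0 subr_eq0 eq_sym (negPf t1) => /eqP.
split=> //; apply/eqP; rewrite -(mulrI_eq0 _ (mulfI two_neq0)).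
by move: a1; rewrite dd addr0 => ->.
Qed.

End MinusOneNonSquare.

Section FiniteField.
Variable F : finFieldType.

Lemma finField_two_neq0 : odd #|F| -> (2 : F) != 0.
Proof.
move=> oddF; apply/eqP => two0.
have char2 : 2%N \in [pchar F] by rewrite inE /= two0 eqxx.
have cardF : #|F| = (2 ^ logn 2 #|F|)%N by exact: card_pprimeChar char2.
move: oddF (finNzRing_gt1 F); rewrite cardF oddX orbF => /eqP ->.
by rewrite expn0.
Qed.

Lemma finField_sqr_neqN1 : (#|F| %% 4 = 3)%N -> forall x : F, x ^+ 2 != -1.
Proof.
move=> F3 x; apply/eqP => x2.
have cardF : #|F| = (4 * (#|F| %/ 4) + 3)%N by rewrite {1}(divn_eq #|F| 4) F3 mulnC.
have x0 : x != 0 by apply: contra_eq_neq x2 => ->; rewrite expr0n eq_sym oppr_eq0 oner_eq0.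
have : x ^+ #|F|.-1 = 1.
  by apply: (mulIf x0); rewrite mul1r -exprSr prednK ?expf_card // cardF addn3.
have -> : #|F|.-1 = (2 * (2 * (#|F| %/ 4) + 1))%N by rewrite {1}cardF; lia.
rewrite exprM x2 exprD exprM sqrrN !expr1n mul1r expr1 => /eqP.
rewrite eq_sym -addr_eq0 -mulr2n; apply/negP/finField_two_neq0.
by rewrite cardF oddD oddM.
Qed.

(* [x |-> (x ^+ 2, x is the chosen square root of x ^+ 2)] is injective and misses [(0, false)]. *)
Lemma card_sqr_gt : (#|F| < 2 * #|[set x ^+ 2 | x : F]|)%N.
Proof.
set A := [set _ | _ : F].
pose sqrt v := odflt 0 [pick y : F | y ^+ 2 == v].
have sqrtK x : sqrt (x ^+ 2) ^+ 2 = x ^+ 2.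
  by rewrite /sqrt; case: pickP => [y /eqP //|/(_ x)]; rewrite eqxx.
have sqr_eq0 (x : F) : x ^+ 2 = 0 -> x = 0 by move/eqP; rewrite expf_eq0 => /eqP.
pose tag x := (x ^+ 2, x == sqrt (x ^+ 2)).
have tag_inj : {in [set: F] &, injective tag}.
  move=> x y _ _ [exy]; rewrite -exy; set z := sqrt _ => exz.
  move/eqP: exy; rewrite eq_sym eqf_sqr => /orP[/eqP -> // | /eqP yNx].
  have /eqP := sqrtK x; rewrite -/z eqf_sqr => /orP[] /eqP zx.
    by move: exz; rewrite zx eqxx yNx => /esym/eqP.
  by move: exz; rewrite zx yNx eqxx => /eqP.
have tagA x : x \in [set: F] -> tag x \in setX A [set: bool] :\ (0, false).
  move=> _; rewrite !inE /= andbT; apply/andP; split; last by apply/imsetP; exists x.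
  by apply/eqP => -[x2]; rewrite (sqr_eq0 _ (etrans (sqrtK x) x2)) (sqr_eq0 x x2) eqxx.
have A0 : (0 : F) \in A by apply/imsetP; exists 0; rewrite ?expr0n.
have := leq_card_in_homo tag_inj tagA; rewrite cardsT.
have := cardsD1 (0, false) (setX A [set: bool]).
by rewrite !inE A0 cardsX cardsT card_bool /= mulnC => ->; rewrite add1n ltnS.
Qed.

Lemma sum_two_sqr (a : F) : exists x y : F, x ^+ 2 + y ^+ 2 = a.
Proof.
pose A := [set x ^+ 2 | x : F]; pose B := [set a - z | z in A].
have cardB : #|B| = #|A| by apply: card_imset => u v /addrI /oppr_inj.
have : (#|A :|: B| <= #|F|)%N by rewrite -cardsT subset_leq_card ?subsetT.
rewrite cardsU cardB; case: (set_0Vmem (A :&: B)) => [->|[z]].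
  by rewrite cards0 subn0 addnn -mul2n leqNgt card_sqr_gt.
rewrite !inE => /andP[/imsetP[x _ ->] /imsetP[_ /imsetP[y _ ->] exy]].
by exists x, y; rewrite exy addrNK.
Qed.

Lemma card_plane_le (n : 'rV[F]_3) : n != 0 ->
  (#|[set d : 'rV[F]_3 | dotv d n == 0%R]| <= #|F| ^ 2)%N.
Proof.
move=> n0; have [i ni] : exists i, n 0 i != 0.
  apply/existsP; apply: contraNT n0 => /existsPn n0.
  by apply/eqP/rowP => i; rewrite mxE; apply/eqP/negbNE.
have -> : (#|F| ^ 2 = #|'rV[F]_2|)%N by rewrite card_mx.
apply: (leq_card_in (col' i)) => d d'; rewrite !inE => /eqP dn /eqP d'n e.
apply/eqP; rewrite -subr_eq0; apply/eqP; set w := d - d'.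
have w_off j : j != i -> w 0 j = 0.
  case: (unliftP i j) => [k -> _ | -> /eqP //].
  by have := congr1 (fun v : 'rV[F]_2 => v 0 k) e; rewrite !mxE => ->; rewrite subrr.
have wn : w 0 i * n 0 i = 0.
  rewrite -[RHS](subrr 0) -{1}dn -d'n -dotvBl /dotv (bigD1 i) //= big1 ?addr0 //.
  by move=> j /w_off ->; rewrite mul0r.
apply/rowP => j; rewrite [RHS]mxE; have [-> | /w_off //] := eqVneq j i.
by apply/eqP; move/eqP: wn; rewrite mulf_eq0 (negPf ni) orbF.
Qed.

(* The lines through [p] in a plane form a projective line, with [#|F|.+1] points. *)
Lemma card_pencil_le (A : {set 'rV[F]_3}) (p n : 'rV[F]_3) :
  n != 0 -> {in A, forall x, dotv (x - p) n = 0} ->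
  {in A &, forall x y t, x != p -> y != p -> y - p = t *: (x - p) -> x = y} ->
  (#|A| <= #|F|.+2)%N.
Proof.
move=> n0 A_plane A_lines.
pose V := [set d : 'rV[F]_3 | dotv d n == 0].
pose f (xt : 'rV[F]_3 * F) := xt.2 *: (xt.1 - p).
have f_inj : {in setX (A :\ p) [set~ 0] &, injective f}.
  move=> [x t] [y s]; rewrite !inE /= => /andP[/andP[xp xA] t0] /andP[/andP[yp yA] s0] e.
  have exy : x = y.
    by apply: A_lines => //; rewrite -[y - p](scalerK s0) -/(f (y, s)) -e scalerA.
  move: e; rewrite /f -exy /= => /eqP; rewrite -subr_eq0 -scalerBl scaler_eq0 subr_eq0.
  by rewrite (negPf (_ : x - p != 0)) ?subr_eq0 // orbF => /eqP ->.
have fV : {in setX (A :\ p) [set~ 0], forall xt, f xt \in V :\ 0}.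
  move=> [x t]; rewrite !inE /= => /andP[/andP[xp xA] t0].
  by rewrite scaler_eq0 negb_or t0 subr_eq0 xp /f /= dotvZl A_plane ?mulr0.
have q1 : (1 < #|F|)%N := finNzRing_gt1 F.
have : (#|A :\ p| * #|F|.-1 <= #|F|.+1 * #|F|.-1)%N.
  rewrite -(cardsC1 (0 : F)) -cardsX; apply: leq_trans (leq_card_in_homo f_inj fV) _.
  have := card_plane_le n0; have := cardsD1 0 V; rewrite !inE dotv0l eqxx -/V /=.
  rewrite cardsC1 -mulnn; move: #|F| q1 #|V :\ 0| => [|q] // _ v /= ->; nia.
rewrite leq_pmul2r; last by lia.
by rewrite (cardsD1 p A); move: #|A :\ p| => a; case: (p \in A) => /=; lia.
Qed.

Definition sphere (c : 'rV[F]_3) (r : F) : {set 'rV[F]_3} := [set x | on_sphere x c r].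

Lemma on_sphereE (x c : 'rV[F]_3) (r : F) : on_sphere x c r = (sqnorm (x - c) == r).
Proof.
rewrite /on_sphere /sqnorm /dotv; congr (_ == _).
by apply: eq_bigr => i _; rewrite !mxE expr2.
Qed.

Definition two_sqr (a : F) : F * F := odflt (0, 0) [pick uv : F * F | uv.1 ^+ 2 + uv.2 ^+ 2 == a].

Lemma two_sqrP (a : F) : (two_sqr a).1 ^+ 2 + (two_sqr a).2 ^+ 2 = a.
Proof.
rewrite /two_sqr; case: pickP => [uv /eqP // | no_uv].
by have [x [y xy]] := sum_two_sqr a; have := no_uv (x, y); rewrite /= xy eqxx.
Qed.

Lemma card_sqr_eq_le2 (w a : F) : (#|[set z : F | (z - w) ^+ 2 == a]| <= 2)%N.
Proof.
case: (set_0Vmem [set z : F | (z - w) ^+ 2 == a]) => [-> | [z0]]; first by rewrite cards0.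
rewrite inE => /eqP z0a; apply: (@leq_trans #|[set z0; 2 * w - z0]|).
  apply: subset_leq_card; apply/subsetP => z; rewrite !inE -z0a eqf_sqr.
  by case/orP => /eqP h; apply/orP; [left | right]; apply/eqP;
     rewrite -(subrK w z) h; [rewrite subrK | ring].
by rewrite cards2; case: (_ != _).
Qed.

End FiniteField.

Section Spheres.
Variable F : finFieldType.
Hypothesis sqr_neqN1 : forall x : F, x ^+ 2 != -1.
Implicit Types (c n : 'rV[F]_3) (r : F).

Lemma card_sphere_plane_le (A : {set 'rV[F]_3}) c n r (delta : F) :
  n != 0 -> {in A, forall x, sqnorm (x - c) = r /\ dotv (x - c) n = delta} ->
  (forall e d, sqnorm e = r -> dotv e n = delta ->
     sqnorm d = 0 -> dotv e d = 0 -> dotv d n = 0 -> d = 0) ->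
  (#|A| <= #|F|.+2)%N.
Proof.
move=> n0 A_sec no_line; case: (set_0Vmem A) => [-> | [p pA]]; first by rewrite cards0.
have [pr pdelta] := A_sec p pA.
have shift x : p - c + (x - p) = x - c by rewrite addrC addrA subrK.
have A_plane : {in A, forall x, dotv (x - p) n = 0}.
  move=> x xA; have [_ xdelta] := A_sec x xA.
  have -> : x - p = (x - c) - (p - c) by rewrite opprB addrA subrK.
  by rewrite dotvBl xdelta pdelta subrr.
apply: (card_pencil_le n0 A_plane) => x y xA yA t xp yp yx.
have [t0|t0] := eqVneq t 0.
  by move: yx yp; rewrite t0 scale0r => /eqP; rewrite subr_eq0 => ->.
have [t1|t1] := eqVneq t 1.
  by move: yx; rewrite t1 scale1r => /addIr.
have [xp_iso xp_perp] : sqnorm (x - p) = 0 /\ dotv (p - c) (x - p) = 0.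
  have xr : sqnorm (p - c + (x - p)) = r by rewrite shift; case: (A_sec x xA).
  have yr : sqnorm (p - c + t *: (x - p)) = r by rewrite -yx shift; case: (A_sec y yA).
  exact (isotropic_of_collinear_on_sphere sqr_neqN1 pr xr yr t0 t1).
suff : x - p = 0 by move/eqP; rewrite subr_eq0 (negPf xp).
exact: no_line xp_iso xp_perp (A_plane x xA).
Qed.

Lemma sphereI_plane c c' r r' x : x \in sphere c r :&: sphere c' r' ->
  sqnorm (x - c) = r /\ dotv (x - c) (c' - c) = (r - r' + sqnorm (c' - c)) / 2.
Proof.
rewrite !inE !on_sphereE => /andP[/eqP xr /eqP xr']; split=> //.
apply: (mulIf (two_neq0 sqr_neqN1)); rewrite divfK ?(two_neq0 sqr_neqN1) //.
have : x - c' = (x - c) + (-1) *: (c' - c) by rewrite scaleN1r opprB addrA subrK.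
by move/(congr1 (fun v => sqnorm v)); rewrite sqnormDZ xr xr' => ->; ring.
Qed.

Lemma card_sphereI_le_nonzero c c' r r' t : c != c' -> r = t ^+ 2 -> t != 0 ->
  (#|sphere c r :&: sphere c' r'| <= #|F|.+2)%N.
Proof.
move=> cc' rt t0.
apply: (card_sphere_plane_le (c := c) (r := r) (n := c' - c)
                             (delta := (r - r' + sqnorm (c' - c)) / 2)).
- by rewrite subr_eq0 eq_sym.
- by move=> x /sphereI_plane.
- move=> e d er _ dd ed _; exact (perp_isotropic_sqr sqr_neqN1 dd ed (etrans er rt) t0).
Qed.

Lemma card_null_conesI_le c c' : c != c' -> (#|sphere c 0%R :&: sphere c' 0%R| <= #|F|.+2)%N.
Proof.
move=> cc'; set n := c' - c; have n0 : n != 0 by rewrite subr_eq0 eq_sym.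
have cone_sec x : x \in sphere c 0 :&: sphere c' 0 ->
    sqnorm (x - c) = 0 /\ dotv (x - c) n = sqnorm n / 2.
  by move/sphereI_plane; rewrite subrr add0r.
have [n_iso|n_aniso] := eqVneq (sqnorm n) 0.
  have n2 : n 0 2 != 0 by apply: contra_neq n0; apply: isotropic_eq0.
  apply: (@leq_trans #|F|); last by rewrite -addn2 leq_addr.
  apply: (@leq_card_in _ _ (fun x => (x - c) 0 2)) => x y /cone_sec[xc xn] /cone_sec[yc yn] exy.
  rewrite n_iso mul0r in xn yn.
  have := perp_isotropic_null sqr_neqN1 n_iso xn xc.
  rewrite /= exy -(perp_isotropic_null sqr_neqN1 n_iso yn yc) => /(scalerI n2).
  exact: addIr.
apply: (card_sphere_plane_le n0 cone_sec) => e d ee en dd ed dn.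
apply (isotropic_eq0 sqr_neqN1 dd); apply/eqP.
have : d 0 2 * (sqnorm n / 2) = 0.
  by rewrite -en -dotvZl (perp_isotropic_null sqr_neqN1 dd ed ee) dotvZl dn mulr0.
by move/eqP; rewrite !mulf_eq0 invr_eq0 (negPf n_aniso) (negPf (two_neq0 sqr_neqN1)) !orbF.
Qed.

Lemma card_sphereI_le c c' r r' : is_square r -> is_square r' -> (c, r) != (c', r') ->
  (#|sphere c r :&: sphere c' r'| <= #|F|.+2)%N.
Proof.
move=> /existsP[t /eqP rt] /existsP[t' /eqP rt'] neq.
have [ec | cc'] := eqVneq c c'.
  rewrite -ec in neq *; have rr' : r != r' by apply: contraNneq neq => ->.
  suff -> : sphere c r :&: sphere c r' = set0 by rewrite cards0.
  apply/setP => x; rewrite !inE !on_sphereE.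
  by apply/negP => /andP[/eqP xr /eqP xr']; move: rr'; rewrite -xr xr' eqxx.
have [t0 | t0] := eqVneq t 0; last exact: card_sphereI_le_nonzero cc' rt t0.
have [t'0 | t'0] := eqVneq t' 0.
  by rewrite rt rt' t0 t'0 expr0n; exact: card_null_conesI_le.
by rewrite setIC; apply: card_sphereI_le_nonzero rt' t'0; rewrite eq_sym.
Qed.

Lemma card_sphere_le c r : (#|sphere c r| <= #|F| ^ 2 + 2 * #|F|)%N.
Proof.
rewrite -sum1_card (partition_big (fun x : 'rV[F]_3 => x 0 2) predT) //=.
apply: (@leq_trans (\sum_(z : F) #|F|.+2)); last by rewrite sum_nat_const -[#|xpredT|]/#|F|; lia.
apply: leq_sum => z _; rewrite sum1_card.
have -> : #|[pred x : 'rV[F]_3 | (x \in sphere c r) && (x 0 2 == z)]| =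
          #|sphere c r :&: [set x : 'rV[F]_3 | x 0 2 == z]| by apply: eq_card => x; rewrite !inE.
apply: (card_sphere_plane_le (c := c) (r := r) (n := delta_mx 0 2) (delta := z - c 0 2)).
- by apply/eqP => /matrixP/(_ 0 2)/eqP; rewrite !mxE !eqxx oner_eq0.
- move=> x; rewrite !inE on_sphereE => /andP[/eqP xr /eqP xz].
  by rewrite dotv_delta !mxE xz.
- move=> e d _ _ dd _; rewrite dotv_delta; exact (isotropic_eq0 sqr_neqN1 dd).
Qed.

Definition chord_param (u v m : F) : F := - 2 * (u + v * m) / (1 + m ^+ 2).

(* The second intersection of the circle through [(u, v)] with the line of slope [m] through it. *)
Definition circle_point (u v m : F) : F * F :=
  (u + chord_param u v m, v + chord_param u v m * m).

Lemma circle_pointP u v m :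
  (circle_point u v m).1 ^+ 2 + (circle_point u v m).2 ^+ 2 = u ^+ 2 + v ^+ 2.
Proof. by rewrite /circle_point /chord_param /=; field; exact: add1_sqr_neq0. Qed.

Lemma circle_point_inj u v : u ^+ 2 + v ^+ 2 != 0 -> injective (circle_point u v).
Proof.
move=> uv0 m m' [/addrI lm]; rewrite lm => /addrI em.
have [l0 | l0] := eqVneq (chord_param u v m') 0; last exact (mulfI l0 em).
have line0 mm : chord_param u v mm = 0 -> u + v * mm = 0.
  rewrite /chord_param => /eqP; rewrite !mulf_eq0 invr_eq0 oppr_eq0.
  by rewrite (negPf (add1_sqr_neq0 sqr_neqN1 _)) (negPf (two_neq0 sqr_neqN1)) orbF => /eqP.
have um := line0 _ (etrans lm l0); have um' := line0 _ l0.
have [v0 | v0] := eqVneq v 0.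
  by move: uv0 um; rewrite v0 mul0r addr0 => /[swap] ->; rewrite expr0n addr0 eqxx.
by apply: (mulfI v0); apply: (addrI u); rewrite um um'.
Qed.

Lemma card_sphere_ge c r : (#|F| ^ 2 <= #|sphere c r| + 2 * #|F|)%N.
Proof.
pose a z := r - (z - c 0 2) ^+ 2; pose Z := [set z | a z != 0].
have cardZ : (#|F| <= #|Z| + 2)%N.
  rewrite -(cardsC Z) leq_add2l.
  have -> : ~: Z = [set z | (z - c 0 2) ^+ 2 == r].
    by apply/setP => z; rewrite !inE negbK subr_eq0 eq_sym.
  exact: card_sqr_eq_le2.
pose phi (zm : F * F) := let uv := two_sqr (a zm.1) in
  let p := circle_point uv.1 uv.2 zm.2 in vec3 p.1 p.2 (zm.1 - c 0 2) + c.
have phi_inj : {in setX Z [set: F] &, injective phi}.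
  move=> [z m] [z' m']; rewrite !inE /= andbT => az az' e.
  have ez : z = z'.
    by have := congr1 (fun x : 'rV[F]_3 => x 0 2) e; rewrite !mxE /= => /addIr /addIr.
  subst z'; congr pair; set uv := two_sqr (a z).
  apply: (@circle_point_inj uv.1 uv.2); first by rewrite two_sqrP.
  have := congr1 (fun x : 'rV[F]_3 => x 0 0) e; have := congr1 (fun x : 'rV[F]_3 => x 0 1) e.
  rewrite !mxE /= => /addIr e1 /addIr e0.
  by apply/eqP; rewrite xpair_eqE e0 e1 !eqxx.
have phi_sphere : {in setX Z [set: F], forall zm, phi zm \in sphere c r}.
  move=> [z m] _; rewrite inE on_sphereE /phi /= addrK sqnorm_vec3 circle_pointP two_sqrP.
  by rewrite /a subrK.
have := leq_card_in_homo phi_inj phi_sphere; rewrite cardsX cardsT.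
by rewrite -mulnn; move: cardZ; move: #|Z| #|sphere c r| #|F| => nZ nS q; nia.
Qed.

End Spheres.

Lemma sum_sqr_centered (T : finType) (R : comRingType) (A : {pred T}) (f : T -> R) :
  \sum_(x in A) (#|A|%:R * f x - \sum_(y in A) f y) ^+ 2 =
  #|A|%:R * (#|A|%:R * \sum_(x in A) f x ^+ 2 - (\sum_(x in A) f x) ^+ 2).
Proof.
set N : R := #|A|%:R; set D := \sum_(y in A) f y.
rewrite (eq_bigr (fun x => N ^+ 2 * f x ^+ 2 - 2 * N * D * f x + D ^+ 2)) => [|x _]; last by ring.
by rewrite big_split sumrB /= -!mulr_sumr sumr_const -/D -mulr_natr; ring.
Qed.

Section SecondMoment.
Variables (T : finType) (R : realDomainType).

Lemma sqr_sum_le_card (A : {pred T}) (f : T -> R) :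
  (\sum_(x in A) f x) ^+ 2 <= #|A|%:R * \sum_(x in A) f x ^+ 2.
Proof.
have [A0 | A_gt0] := posnP #|A|.
  by rewrite !big_pred0 ?A0 ?mul0r ?expr0n // => x; apply/negbTE; rewrite (card0_eq A0).
have : 0 <= \sum_(x in A) (#|A|%:R * f x - \sum_(y in A) f y) ^+ 2.
  by apply: sumr_ge0 => x _; exact: sqr_ge0.
by rewrite sum_sqr_centered pmulr_rge0 ?ltr0n // subr_ge0.
Qed.

Lemma second_moment_le (P : {pred T}) (g : T -> R) :
  (#|T|%:R * \sum_(x in P) g x - #|P|%:R * \sum_x g x) ^+ 2 <=
  #|P|%:R * (#|T|%:R * (#|T|%:R * \sum_x g x ^+ 2 - (\sum_x g x) ^+ 2)).
Proof.
pose f x := #|T|%:R * g x - \sum_y g y.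
have -> : #|T|%:R * \sum_(x in P) g x - #|P|%:R * \sum_x g x = \sum_(x in P) f x.
  by rewrite /f sumrB mulr_sumr sumr_const mulr_natl.
apply: le_trans (sqr_sum_le_card P f) _; rewrite ler_wpM2l ?ler0n //.
rewrite -(sum_sqr_centered T g) big_mkcond /=; apply: ler_sum => x _.
by case: (x \in P); rewrite ?sqr_ge0.
Qed.

End SecondMoment.

Section DoubleCounting.
Variables (T U : finType) (R : T -> U -> bool) (S : {set U}).

Definition degree (x : T) : nat := #|[set s in S | R x s]|.

Lemma degreeE x : degree x = (\sum_(s in S) R x s)%N.
Proof.
rewrite /degree -sum1_card big_mkcond [RHS]big_mkcond /=.
by apply: eq_bigr => s _; rewrite inE; case: (s \in S); case: (R x s).
Qed.

Lemma card_incidences (P : {set T}) :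
  #|[set xs in setX P S | R xs.1 xs.2]| = (\sum_(x in P) degree x)%N.
Proof.
rewrite -sum1_card /degree; under [in RHS]eq_bigr => x _ do rewrite -sum1_card.
by rewrite pair_big_dep /=; apply: eq_bigl => -[x s]; rewrite !inE andbA.
Qed.

Lemma sum_degree : (\sum_x degree x = \sum_(s in S) #|[set x | R x s]|)%N.
Proof.
under eq_bigr do rewrite degreeE; rewrite exchange_big /=; apply: eq_bigr => s _.
by rewrite -sum1_card [RHS]big_mkcond; apply: eq_bigr => x _; rewrite inE; case: (R x s).
Qed.

Lemma sum_degree_sqr :
  (\sum_x degree x ^ 2 = \sum_(s in S) \sum_(s' in S) #|[set x | R x s && R x s']|)%N.
Proof.
under eq_bigr do rewrite degreeE expnS expn1 big_distrlr /=.
rewrite exchange_big /=; apply: eq_bigr => s _.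
rewrite exchange_big /=; apply: eq_bigr => s' _.
rewrite -sum1_card [RHS]big_mkcond; apply: eq_bigr => x _; rewrite inE.
by case: (R x s); case: (R x s').
Qed.

End DoubleCounting.

Lemma second_moment_arith (q M I D E k : int) :
  3 <= q -> 0 <= M ->
  M * q ^+ 2 <= D + M * (2 * q) -> D <= M * q ^+ 2 + M * (2 * q) -> E <= D + M * (M * (q + 2)) ->
  (q ^+ 3 * I - M * D) ^+ 2 <= M * (q ^+ 3 * (q ^+ 3 * E - D ^+ 2)) ->
  q ^+ 2 <= k * M -> M <= k * q ^+ 2 ->
  I ^+ 2 <= (24 * k + 12) * M ^+ 3.
Proof.
move=> q3 M0 Dlo Dhi Ehi cs qM Mq.
have q0 : 0 <= q by lia.
have Mq3 : 0 <= M * q ^+ 3 by rewrite mulr_ge0 ?exprn_ge0.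
have D_ge : M * q * (q - 2) <= D by lra.
have D0 : 0 <= D by apply: le_trans D_ge; rewrite !mulr_ge0 //; lia.
(* The leading terms [M^2 q^4] of [q^3 E] and [D^2] cancel. *)
have var_le : q ^+ 3 * E - D ^+ 2 <= 3 * M * q ^+ 5 + 6 * M ^+ 2 * q ^+ 3.
  have := ler_wpM2l (exprn_ge0 3 q0) Ehi.
  have := ler_wpM2l (exprn_ge0 3 q0) Dhi.
  have : (M * q * (q - 2)) ^+ 2 <= D ^+ 2.
    by rewrite ler_sqr ?nnegrE ?mulr_ge0 //; lia.
  have : M * q ^+ 4 <= M * q ^+ 5.
    by apply: ler_wpM2l => //; rewrite [q ^+ 5]exprSr; apply: ler_peMr; [exact: exprn_ge0 | lia].
  have : 0 <= M ^+ 2 * q ^+ 2 by rewrite mulr_ge0 ?exprn_ge0.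
  lra.
have MD_le : M * D <= 3 * M ^+ 2 * q ^+ 2.
  have := ler_wpM2l M0 Dhi.
  have : M ^+ 2 * q <= M ^+ 2 * q ^+ 2.
    by apply: ler_wpM2l; rewrite ?exprn_ge0 // expr2; apply: ler_peMr; lia.
  lra.
have I_le : q ^+ 6 * I ^+ 2 <=
             18 * (M ^+ 4 * q ^+ 4) + 6 * (M ^+ 2 * q ^+ 8) + 12 * (M ^+ 3 * q ^+ 6).
  have := ler_wpM2l Mq3 var_le.
  have : (M * D) ^+ 2 <= (3 * M ^+ 2 * q ^+ 2) ^+ 2.
    by rewrite ler_sqr ?nnegrE ?mulr_ge0 ?exprn_ge0 //; lra.
  have : (q ^+ 3 * I) ^+ 2 <= 2 * (M * D) ^+ 2 + 2 * (q ^+ 3 * I - M * D) ^+ 2.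
    by rewrite -subr_ge0 (_ : _ - _ = (q ^+ 3 * I - 2 * (M * D)) ^+ 2) ?sqr_ge0 //; ring.
  lra.
have M4_le : M ^+ 4 * q ^+ 4 <= k * (M ^+ 3 * q ^+ 6).
  by have := ler_wpM2l (mulr_ge0 (exprn_ge0 3 M0) (exprn_ge0 4 q0)) Mq; lra.
have M2_le : M ^+ 2 * q ^+ 8 <= k * (M ^+ 3 * q ^+ 6).
  by have := ler_wpM2l (mulr_ge0 (exprn_ge0 2 M0) (exprn_ge0 6 q0)) qM; lra.
have q6 : 0 < q ^+ 6 by rewrite exprn_gt0 //; lia.
by rewrite -(ler_pM2l q6); lra.
Qed.

Section SphereIncidences.
Variable F : finFieldType.
Hypothesis sqr_neqN1 : forall x : F, x ^+ 2 != -1.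
Variable S : {set 'rV[F]_3 * F}.
Hypothesis S_sqr : forall s, s \in S -> is_square s.2.

Local Notation deg := (degree (fun x (s : 'rV[F]_3 * F) => on_sphere x s.1 s.2) S).

Lemma sum_degree_ge : (#|S| * #|F| ^ 2 <= \sum_x deg x + #|S| * (2 * #|F|))%N.
Proof.
rewrite sum_degree -!sum_nat_const -big_split /=.
by apply: leq_sum => s _; exact: card_sphere_ge.
Qed.

Lemma sum_degree_le : (\sum_x deg x <= #|S| * #|F| ^ 2 + #|S| * (2 * #|F|))%N.
Proof.
rewrite sum_degree -!sum_nat_const -big_split /=.
by apply: leq_sum => s _; exact: card_sphere_le.
Qed.

Lemma sum_degree_sqr_le : (\sum_x deg x ^ 2 <= \sum_x deg x + #|S| * (#|S| * (#|F| + 2)))%N.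
Proof.
rewrite sum_degree_sqr sum_degree -!sum_nat_const -big_split /=.
have card_pair s s' : #|[set x | on_sphere x s.1 s.2 & on_sphere x s'.1 s'.2]| =
                      #|sphere s.1 s.2 :&: sphere s'.1 s'.2| by apply: eq_card => x; rewrite !inE.
apply: leq_sum => s sS; rewrite (bigD1 s sS) /= card_pair setIid leq_add2l.
apply: (@leq_trans (\sum_(s' | (s' \in S) && (s' != s)) (#|F| + 2))).
  apply: leq_sum => s' /andP[s'S s's]; rewrite card_pair addn2.
  by apply: card_sphereI_le; rewrite ?S_sqr // -!surjective_pairing eq_sym.
by rewrite [leqRHS](bigD1 s sS) leq_addl.
Qed.

Lemma incidences_sqr_le (P : {set 'rV[F]_3}) (k : nat) :
  (3 <= #|F|)%N -> #|P| = #|S| -> (#|F| ^ 2 <= k * #|P|)%N -> (#|P| <= k * #|F| ^ 2)%N ->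
  (incidences P S ^ 2 <= (24 * k + 12) * #|P| ^ 3)%N.
Proof.
move=> q3 PS qP Pq; set D := (\sum_x deg x)%N; set E := (\sum_x deg x ^ 2)%N.
have cs := second_moment_le P (fun x => (deg x)%:R : int).
have sumD : \sum_x (deg x)%:R = D%:R :> int by rewrite natr_sum.
have sumE : \sum_x (deg x)%:R ^+ 2 = E%:R :> int.
  by rewrite natr_sum; apply: eq_bigr => x _; rewrite natrX.
have sumI : \sum_(x in P) (deg x)%:R = (incidences P S)%:R :> int.
  by rewrite -natr_sum; congr _%:R; exact: esym (card_incidences _ _ P).
rewrite sumD sumE sumI card_mx natrX in cs.
rewrite -(ler_nat int) natrX natrM natrD natrM natrX.
apply: (second_moment_arith _ _ _ _ _ cs).
- by rewrite ler_nat.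
- exact: ler0n.
- by have := sum_degree_ge; rewrite -PS -(ler_nat int) !(natrD, natrM, natrX).
- by have := sum_degree_le; rewrite -PS -(ler_nat int) !(natrD, natrM, natrX).
- by have := sum_degree_sqr_le; rewrite -PS -(ler_nat int) !(natrD, natrM).
- by rewrite -(ler_nat int) !(natrM, natrX) in qP.
- by rewrite -(ler_nat int) !(natrM, natrX) in Pq.
Qed.

End SphereIncidences.

Local Close Scope ring_scope.

Theorem corollary1p5 :
  forall k : nat, exists C : nat,
  forall (F : finFieldType) (P : {set 'rV[F]_3}) (S : {set 'rV[F]_3 * F}),
    #|F| %% 4 = 3 ->
    (forall s, s \in S -> is_square s.2) ->
    #|P| = #|S| ->
    #|F| ^ 2 <= k * #|P| -> #|P| <= k * #|F| ^ 2 ->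
    incidences P S ^ 4 <= C * (#|P| ^ 3 * #|S| ^ 3).
Proof.
move=> k; exists ((24 * k + 12) ^ 2)%N => F P S F3 S_sqr PS qP Pq.
have q3 : (3 <= #|F|)%N by move: #|F| F3 => q; lia.
have := incidences_sqr_le (finField_sqr_neqN1 F3) S_sqr q3 PS qP Pq.
by rewrite -PS mulnn -expnMn -[4]/(2 * 2)%N expnM leq_exp2r.
Qed.
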